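(* Let $T>0$ and consider single-stage allocations $(T(1),T(0))$ with $T(1),T(0)>0$ and $T(1)+T(0)=T$. For standard deviations $\sigma(1),\sigma(0)\ge 0$, not both zero, let $$V(T(1),T(0))=\frac{\sigma^2(1)}{T(1)}+\frac{\sigma^2(0)}{T(0)},\qquad V(T^*(1),T^*(0))=\frac{(\sigma(1)+\sigma(0))^2}{T}.$$ Then the optimal solution of $$\inf_{T(1),T(0)}\ \sup_{\sigma(1),\sigma(0)}\ \frac{V(T(1),T(0))}{V(T^*(1),T^*(0))}$$ is $T(1)=T(0)=T/2$. Moreover, $$\sup_{\sigma(1),\sigma(0)}\frac{V(T/2,T/2)}{V(T^*(1),T^*(0))}=2,$$ and this supremum is attained when either $\sigma(1)=0$ or $\sigma(0)=0$.
   Context: $\sigma(1),\sigma(0)$ are the standard deviations of the treated and control potential outcomes $Y(1),Y(0)$. $(T^*(1),T^*(0))=\big(\tfrac{\sigma(1)}{\sigma(1)+\sigma(0)}T,\tfrac{\sigma(0)}{\sigma(1)+\sigma(0)}T\big)$ is the Neyman allocation, which minimizes $V$ over allocations summing to $T$; its value is $(\sigma(1)+\sigma(0))^2/T$. The quantity $V$ is the variance of the difference-in-means estimator under a completely randomized experiment with $T(1)$ treated and $T(0)$ control subjects drawn from a super-population. *)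

From HB Require Import structures.
From mathcomp Require Import all_boot all_order all_algebra.
From mathcomp Require Import all_classical all_reals.
Set Implicit Arguments. Unset Strict Implicit. Unset Printing Implicit Defensive.
Import Order.TTheory GRing.Theory Num.Theory.
Local Open Scope ring_scope.
Local Open Scope classical_set_scope.

(* Variance of difference-in-means with allocation (T1, T0). *)
Definition V {R : realType} (s1 s0 T1 T0 : R) : R :=
  s1 ^+ 2 / T1 + s0 ^+ 2 / T0.

(* Value at the Neyman allocation: (s1 + s0)^2 / T. *)
Definition Vstar {R : realType} (s1 s0 T : R) : R := (s1 + s0) ^+ 2 / T.

Definition admissible_sd {R : realType} (s1 s0 : R) : Prop :=
  0 <= s1 /\ 0 <= s0 /\ (s1 != 0 \/ s0 != 0).

Definition admissible_alloc {R : realType} (T T1 T0 : R) : Prop :=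
  0 < T1 /\ 0 < T0 /\ T1 + T0 = T.

Definition vratio {R : realType} (T T1 T0 s1 s0 : R) : R :=
  V s1 s0 T1 T0 / Vstar s1 s0 T.

Definition worst_ratio {R : realType} (T T1 T0 : R) : R :=
  sup [set r : R | exists s1 s0, admissible_sd s1 s0 /\ r = vratio T T1 T0 s1 s0].

From HB Require Import structures.
From mathcomp Require Import all_boot all_order all_algebra.
From mathcomp Require Import all_classical all_reals.
From mathcomp Require Import ring lra.
Import Order.TTheory GRing.Theory Num.Theory.
Local Open Scope ring_scope.

(* With m = min(T1, T0) we have s1^2/T1 + s0^2/T0 <= (s1 + s0)^2/m, so the
   variance ratio is at most T/m, and putting all the deviation on the arm
   of size m attains this bound.  The worst-case ratio is thus T/min(T1, T0);
   since min(T1, T0) <= T/2 with equality only for T1 = T0, it is minimised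
   exactly by the balanced allocation, where it equals 2. *)

Lemma sup_eq_max {R : realType} (E : set R) (x : R) :
  E x -> ubound E x -> sup E = x.
Proof.
move=> Ex ubx; apply/le_anti; rewrite ge_sup //=; last by exists x.
by apply: ub_le_sup => //; exists x.
Qed.

Lemma min_le_midpoint {R : realFieldType} (x y : R) :
  Num.min x y <= (x + y) / 2.
Proof. by rewrite minEle; case: (leP x y) => ?; lra. Qed.

Lemma min_eq_midpoint {R : realFieldType} (x y : R) :
  Num.min x y = (x + y) / 2 -> x = y.
Proof. by rewrite minEle; case: (leP x y) => ? ?; lra. Qed.

Lemma sqr_div_le_min {R : realFieldType} (a b x y : R) :
  0 < a -> 0 < b -> 0 <= x -> 0 <= y ->
  x ^+ 2 / a + y ^+ 2 / b <= (x + y) ^+ 2 / Num.min a b.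
Proof.
move=> a0 b0 x0 y0; set m := Num.min a b.
have m0 : 0 < m by rewrite lt_min a0.
have le_inv (c : R) : 0 < c -> m <= c -> c^-1 <= m^-1.
  by move=> c0 mc; rewrite lef_pV2 ?posrE.
have xa : x ^+ 2 / a <= x ^+ 2 / m.
  by rewrite ler_wpM2l ?sqr_ge0 ?le_inv ?ge_min ?lexx.
have yb : y ^+ 2 / b <= y ^+ 2 / m.
  by rewrite ler_wpM2l ?sqr_ge0 ?le_inv ?ge_min ?lexx ?orbT.
apply: (le_trans (lerD xa yb)); rewrite -mulrDl ler_wpM2r ?invr_ge0 ?(ltW m0) //.
by rewrite sqrrD addrAC lerDl mulrn_wge0 // mulr_ge0.
Qed.

Section Ratio.
Variable R : realType.

Lemma admissible_sd_addr_gt0 (s1 s0 : R) : admissible_sd s1 s0 -> 0 < s1 + s0.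
Proof.
case=> s1_ge0 [s0_ge0 [s1N0 | s0N0]].
- have : 0 < s1 by rewrite lt_def s1N0.
  lra.
- have : 0 < s0 by rewrite lt_def s0N0.
  lra.
Qed.

Lemma vratio_sd0r (T T1 T0 s1 : R) : s1 != 0 -> vratio T T1 T0 s1 0 = T / T1.
Proof.
move=> s1N0; rewrite /vratio /V /Vstar expr0n /= mul0r !addr0 invf_div.
by rewrite mulrC mulrA divfK ?expf_neq0.
Qed.

Lemma vratio_sd0l (T T1 T0 s0 : R) : s0 != 0 -> vratio T T1 T0 0 s0 = T / T0.
Proof.
move=> s0N0; rewrite /vratio /V /Vstar expr0n /= mul0r !add0r invf_div.
by rewrite mulrC mulrA divfK ?expf_neq0.
Qed.

Lemma vratio_le_min (T T1 T0 s1 s0 : R) :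
  admissible_alloc T T1 T0 -> admissible_sd s1 s0 ->
  vratio T T1 T0 s1 s0 <= T / Num.min T1 T0.
Proof.
move=> [T1_gt0 [T0_gt0 <-]] sd.
have S_gt0 : 0 < s1 + s0 by exact: admissible_sd_addr_gt0.
case: sd => s1_ge0 [s0_ge0 _].
rewrite /vratio /Vstar invf_div mulrCA ler_pM2l ?addr_gt0 //.
by rewrite ler_pdivrMr ?exprn_gt0 // mulrC sqr_div_le_min.
Qed.

Lemma worst_ratio_alloc (T T1 T0 : R) :
  admissible_alloc T T1 T0 -> worst_ratio T T1 T0 = T / Num.min T1 T0.
Proof.
move=> alloc; apply: sup_eq_max; last first.
  by move=> _ [s1 [s0 [sd ->]]]; exact: vratio_le_min.
rewrite minEle; case: leP => _.
- exists 1, 0; rewrite vratio_sd0r ?oner_neq0 //.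
  by split=> //; split; [lra | split; [lra | left; exact: oner_neq0]].
- exists 0, 1; rewrite vratio_sd0l ?oner_neq0 //.
  by split=> //; split; [lra | split; [lra | right; exact: oner_neq0]].
Qed.

End Ratio.

Theorem theorem1 (R : realType) (T : R) (hT : 0 < T) :
  (* T/2, T/2 is an optimal solution of inf_{T1,T0} sup_{s1,s0} ... *)
  admissible_alloc T (T / 2) (T / 2) /\
  (forall T1 T0, admissible_alloc T T1 T0 -> worst_ratio T (T / 2) (T / 2) <= worst_ratio T T1 T0) /\
  (* and it is the unique optimal solution *)
  (forall T1 T0, admissible_alloc T T1 T0 ->
     worst_ratio T T1 T0 = worst_ratio T (T / 2) (T / 2) -> T1 = T / 2 /\ T0 = T / 2) /\
  (* the supremum at T/2, T/2 equals 2 *)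
  worst_ratio T (T / 2) (T / 2) = 2 /\
  (* and it is attained when s1 = 0 or s0 = 0 *)
  (forall s1 s0 : R, admissible_sd s1 s0 -> (s1 = 0 \/ s0 = 0) ->
     vratio T (T / 2) (T / 2) s1 s0 = 2).
Proof.
have half : admissible_alloc T (T / 2) (T / 2) by split; [lra | split; lra].
have T_half : T / (T / 2) = 2 by field; lra.
have worst_half : worst_ratio T (T / 2) (T / 2) = 2.
  by rewrite worst_ratio_alloc // minxx.
split=> //; split; [|split; [|split=> //]].
- move=> T1 T0 alloc; rewrite worst_half worst_ratio_alloc //.
  case: alloc => T1_gt0 [T0_gt0 sumT].
  rewrite ler_pdivlMr ?lt_min ?T1_gt0 //.
  by have := min_le_midpoint T1 T0; lra.
- move=> T1 T0 alloc; rewrite worst_half worst_ratio_alloc // => worst2.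
  case: alloc => T1_gt0 [T0_gt0 sumT].
  have T_min : T = 2 * Num.min T1 T0.
    by rewrite -worst2 divfK // gt_eqF // lt_min T1_gt0.
  have T1_T0 : T1 = T0 by apply: min_eq_midpoint; lra.
  by split; lra.
- move=> s1 s0 [_ [_ nz]] [s1_0 | s0_0]; subst.
  + by rewrite vratio_sd0l ?T_half //; case: nz; rewrite ?eqxx.
  + by rewrite vratio_sd0r ?T_half //; case: nz; rewrite ?eqxx.
Qed.
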